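(* The set $\{A/B : A,B\in\mathtt{APAL}\}$ is dense in the positive real numbers $\mathbb{R}^{+}$.
   Context: A positive integer $n$ is antipalindromic if its binary representation $w=w_1w_2\cdots w_L$ (most significant digit first, no leading zeros) has even length $L$ and the second half is the reverse of the bitwise complement of the first half, i.e. $w_i+w_{L+1-i}=1$ for all $i$. For example $52=(110100)_2$ is antipalindromic. $\mathtt{APAL}=\{2,10,12,38,42,52,56,\dots\}$ denotes the set of antipalindromic numbers. *)

From Stdlib Require Import Reals Arith.

Definition binlen (n : nat) : nat := S (Nat.log2 n).

(* Binary digit w_i (1-based, most significant first) of n with L = binlen n:
   w_i = bit of weight 2^(L - i). *)
Definition bdigit (n i : nat) : nat := if Nat.testbit n (binlen n - i) then 1 else 0.

Definition antipalindromic (n : nat) : Prop :=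
  0 < n /\ Nat.Even (binlen n) /\
  forall i, 1 <= i <= binlen n -> bdigit n i + bdigit n (binlen n + 1 - i) = 1.

From Stdlib Require Import Reals.
From Stdlib Require Import Bool Lia Lra List.
Import ListNotations.

(* An antipalindromic number of length 2k is determined by its first half: every
   k-bit number u with leading bit 1 extends to one, namely u 2^k plus the
   complemented reversal of u.  Hence antipalindromic numbers meet every interval
   longer than 2·2^k inside the octave [4^k/2, 4^k].  Choose B antipalindromic close
   to 4^m or to 4^m/2; since the octaves [4^k/2, 4^k] and [4^k, 2·4^k] alternate,
   for one of these two choices the interval (xB, yB) contains a piece of length
   proportional to 4^k of some octave [4^k/2, 4^k], and for m large that piece is
   much longer than 2·2^k, so it contains an antipalindromic A. *)

Fixpoint nat_of_bits (l : list bool) : nat :=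
  match l with [] => 0 | b :: l => 2 * nat_of_bits l + Nat.b2n b end.

Lemma testbit_nat_of_bits (l : list bool) (i : nat) :
  Nat.testbit (nat_of_bits l) i = nth i l false.
Proof.
  revert i; induction l as [|b l IH]; intros [|i]; simpl nat_of_bits.
  - reflexivity.
  - apply Nat.bits_0.
  - apply Nat.testbit_0_r.
  - change (Nat.testbit (2 * nat_of_bits l + Nat.b2n b) (S i) = nth i l false).
    rewrite Nat.testbit_succ_r; apply IH.
Qed.

Lemma nat_of_bits_lt (l : list bool) : nat_of_bits l < 2 ^ length l.
Proof. induction l as [|[] l IH]; simpl; lia. Qed.

Lemma nat_of_bits_app (l1 l2 : list bool) :
  nat_of_bits (l1 ++ l2) = nat_of_bits l1 + 2 ^ length l1 * nat_of_bits l2.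
Proof. induction l1 as [|b l1 IH]; simpl; rewrite ?IH; lia. Qed.

Lemma nat_of_bits_onto (m t : nat) :
  t < 2 ^ m -> exists l, length l = m /\ nat_of_bits l = t.
Proof.
  revert t; induction m as [|m IH]; intros t Ht.
  - exists []; simpl in *; split; lia.
  - destruct (IH (Nat.div2 t)) as [l [Hl Hv]].
    + pose proof (Nat.div2_odd t); simpl in Ht; destruct (Nat.odd t); simpl in *; lia.
    + exists (Nat.odd t :: l); simpl; rewrite Hl, Hv; split; [reflexivity|].
      symmetry; apply Nat.div2_odd.
Qed.

Lemma nth_rev_complement (l : list bool) (j : nat) :
  rev l = map negb l -> j < length l ->
  nth (length l - 1 - j) l false = negb (nth j l false).
Proof.
  intros Hrev Hj.
  replace (length l - 1 - j) with (length l - S j) by lia.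
  rewrite <- rev_nth, Hrev by exact Hj.
  rewrite (nth_indep _ false (negb false)) by (rewrite length_map; exact Hj).
  apply map_nth.
Qed.

(* Least significant bit first: the upper half is [h], the lower half its
   complemented reversal. *)
Definition antipalindrome (h : list bool) : list bool := map negb (rev h) ++ h.

Lemma rev_antipalindrome (h : list bool) :
  rev (antipalindrome h) = map negb (antipalindrome h).
Proof.
  unfold antipalindrome; rewrite rev_app_distr, map_app, <- map_rev, rev_involutive, map_map.
  rewrite (map_ext _ (fun b => b) negb_involutive), map_id; reflexivity.
Qed.

Lemma antipalindromic_of_testbit (L n : nat) :
  0 < L -> Nat.Even L -> 2 ^ (L - 1) <= n < 2 ^ L ->
  (forall p, p < L -> Nat.testbit n (L - 1 - p) = negb (Nat.testbit n p)) ->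
  antipalindromic n.
Proof.
  intros HL Heven Hn Hbits.
  assert (Hlen : binlen n = L).
  { unfold binlen; rewrite (Nat.log2_unique n (L - 1)); [lia|lia|].
    replace (S (L - 1)) with L by lia; exact Hn. }
  assert (Hpos : 0 < n) by (pose proof (Nat.pow_nonzero 2 (L - 1)); lia).
  split; [exact Hpos|]; rewrite Hlen; split; [exact Heven|].
  intros i Hi; unfold bdigit; rewrite Hlen.
  replace (L - i) with (L - 1 - (i - 1)) by lia.
  replace (L - (L + 1 - i)) with (i - 1) by lia.
  rewrite Hbits by lia; destruct (Nat.testbit n (i - 1)); reflexivity.
Qed.

Lemma antipalindromic_with_prefix (k u : nat) :
  2 ^ k <= u < 2 ^ S k ->
  exists A, antipalindromic A /\ u * 2 ^ S k <= A < S u * 2 ^ S k.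
Proof.
  intros Hu.
  destruct (nat_of_bits_onto (S k) u) as [h [Hh Hhu]]; [lia|].
  assert (Hlow : nat_of_bits (map negb (rev h)) < 2 ^ S k).
  { pose proof (nat_of_bits_lt (map negb (rev h))).
    rewrite length_map, length_rev, Hh in *; lia. }
  assert (HA : nat_of_bits (antipalindrome h)
               = nat_of_bits (map negb (rev h)) + 2 ^ S k * u).
  { unfold antipalindrome.
    rewrite nat_of_bits_app, length_map, length_rev, Hh, Hhu; reflexivity. }
  assert (Hmlen : length (antipalindrome h) = 2 * S k)
    by (unfold antipalindrome; rewrite length_app, length_map, length_rev, Hh; lia).
  exists (nat_of_bits (antipalindrome h)); split; [|lia].
  apply (antipalindromic_of_testbit (2 * S k)); [lia|exists (S k); lia| |].
  - replace (2 * S k - 1) with (k + S k) by lia; replace (2 * S k) with (S k + S k) by lia.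
    rewrite !Nat.pow_add_r; nia.
  - intros p Hp; rewrite !testbit_nat_of_bits, <- Hmlen.
    apply nth_rev_complement; [apply rev_antipalindrome|lia].
Qed.

Open Scope R_scope.

Lemma INR_pow2 (n : nat) : INR (2 ^ n) = 2 ^ n.
Proof. rewrite pow_INR; reflexivity. Qed.

Lemma nat_floor (r : R) : 0 <= r -> exists v : nat, INR v <= r < INR v + 1.
Proof.
  intros Hr; destruct (INR_unbounded r) as [N HN]; induction N as [|N IH].
  - simpl in HN; lra.
  - destruct (Rlt_or_le r (INR N)) as [H|H]; [apply IH; lra|].
    exists N; rewrite S_INR in HN; lra.
Qed.

Lemma antipalindromic_in_window (k : nat) (a b : R) :
  (2 ^ k) ^ 2 / 2 <= a -> a + 2 * 2 ^ k < b -> b <= (2 ^ k) ^ 2 ->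
  exists A, antipalindromic A /\ a < INR A < b.
Proof.
  intros Ha Hab Hb.
  destruct k as [|k]; [simpl in *; lra|].
  set (Q := 2 ^ S k) in *.
  assert (HQ : Q = 2 * 2 ^ k) by reflexivity.
  assert (Hk : 0 < 2 ^ k) by (apply pow_lt; lra).
  destruct (nat_floor (a / Q)) as [v [Hv1 Hv2]].
  { unfold Rdiv; apply Rmult_le_pos; [nra|left; apply Rinv_0_lt_compat; lra]. }
  apply (Rmult_le_compat_r Q) in Hv1; [|lra].
  apply (Rmult_lt_compat_r Q) in Hv2; [|lra].
  unfold Rdiv in Hv1, Hv2; rewrite Rmult_assoc, Rinv_l, Rmult_1_r in Hv1, Hv2 by lra.
  destruct (antipalindromic_with_prefix k (S v)) as [A [HA [HA1 HA2]]].
  - split; [apply Nat.lt_le_incl|]; apply INR_lt; rewrite S_INR, INR_pow2.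
    + nra.
    + simpl; nra.
  - exists A; split; [exact HA|].
    apply le_INR in HA1; apply lt_INR in HA2.
    rewrite mult_INR, INR_pow2, S_INR in HA1; rewrite mult_INR, INR_pow2, !S_INR in HA2.
    fold Q in HA1, HA2; split; nra.
Qed.

Lemma antipalindromic_near_square (m : nat) (c : R) :
  c = 1 \/ c = 1 / 2 -> exists B, antipalindromic B /\
    c * (2 ^ S m) ^ 2 - 2 ^ S m <= INR B <= c * (2 ^ S m) ^ 2 + 2 ^ S m.
Proof.
  intros Hc.
  assert (Hm : (1 <= 2 ^ m)%nat) by (pose proof (Nat.pow_nonzero 2 m); lia).
  assert (HP : 2 ^ S m = 2 * 2 ^ m) by reflexivity.
  destruct Hc as [-> | ->].
  - destruct (antipalindromic_with_prefix m (Nat.pred (2 ^ S m))) as [B [HB [HB1 HB2]]].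
    { rewrite Nat.pow_succ_r'; lia. }
    rewrite Nat.succ_pred_pos in HB2 by (rewrite Nat.pow_succ_r'; lia).
    exists B; split; [exact HB|].
    apply le_INR in HB1; apply lt_INR in HB2.
    rewrite mult_INR, INR_pow2, <- Nat.sub_1_r, minus_INR, INR_pow2 in HB1
      by (rewrite Nat.pow_succ_r'; lia).
    rewrite mult_INR, INR_pow2 in HB2; simpl INR in HB1.
    split; nra.
  - destruct (antipalindromic_with_prefix m (2 ^ m)) as [B [HB [HB1 HB2]]].
    { rewrite Nat.pow_succ_r'; lia. }
    exists B; split; [exact HB|].
    apply le_INR in HB1; apply lt_INR in HB2.
    rewrite mult_INR, !INR_pow2 in HB1; rewrite mult_INR, S_INR, !INR_pow2 in HB2.
    rewrite HP in *; split; nra.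
Qed.

Lemma pow2_unbounded (b : R) : exists n, b <= 2 ^ n.
Proof.
  destruct (Pow_x_infinity 2 ltac:(rewrite Rabs_pos_eq; lra) b) as [n Hn].
  exists n; specialize (Hn n (le_n n)).
  rewrite Rabs_pos_eq in Hn by (apply pow_le; lra); lra.
Qed.

Lemma scale_into_octave (w : R) : 1 <= w ->
  exists k c, (c = 1 \/ c = 1 / 2) /\ (2 ^ k) ^ 2 / 4 <= c * w <= (2 ^ k) ^ 2 / 2.
Proof.
  intros Hw.
  assert (Hn : exists n, (2 ^ n) ^ 2 <= w < (2 ^ S n) ^ 2).
  { destruct (pow2_unbounded (w + 1)) as [N HN].
    assert (Hlt : w < (2 ^ N) ^ 2) by (pose proof (pow_R1_Rle 2 N); nra).
    clear HN; induction N as [|N IH]; [simpl in Hlt; lra|].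
    destruct (Rlt_or_le w ((2 ^ N) ^ 2)) as [H|H]; [exact (IH H)|].
    exists N; lra. }
  destruct Hn as [n [H1 H2]]; exists (S n); simpl (2 ^ S n) in *.
  destruct (Rle_or_lt w (2 * (2 ^ n) ^ 2)).
  - exists 1; split; [left; reflexivity|nra].
  - exists (1 / 2); split; [right; reflexivity|nra].
Qed.

(* [x y t / (x + y)] is half the harmonic mean of [x t] and [y t]; pinning it
   to [Q/4, Q/2] makes [x t, y t] overlap the octave [Q/2, Q] in a fixed
   fraction of Q. *)
Lemma octave_overlap (x y Q t : R) :
  0 < x < y -> 0 < Q -> Q / 4 <= x * y * t / (x + y) <= Q / 2 ->
  Rmax (x * t) (Q / 2) + (y - x) / y * (Q / 4) <= Rmin (y * t) Q.
Proof.
  intros [Hx Hxy] HQ [Hlo Hhi].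
  apply (Rmult_le_compat_r (x + y)) in Hlo, Hhi; [|lra|lra].
  replace (x * y * t / (x + y) * (x + y)) with (x * y * t) in Hlo, Hhi by (field; lra).
  assert (Hd : (y - x) / y * (Q / 4) * y = (y - x) * (Q / 4)) by (field; lra).
  assert (Hscale : forall u v, u * y + (y - x) * (Q / 4) <= v * y ->
                     u + (y - x) / y * (Q / 4) <= v).
  { intros u v H; apply (Rmult_le_reg_r y); [lra|].
    rewrite Rmult_plus_distr_r, Hd; exact H. }
  assert (Hsq : 0 <= (y - x) * (y - x) * Q) by (apply Rmult_le_pos; nra).
  assert (Hlo' : y * (Q / 4 * (x + y)) <= y * (x * y * t))
    by (apply Rmult_le_compat_l; lra).
  unfold Rmax, Rmin; destruct (Rle_dec (x * t) (Q / 2)); destruct (Rle_dec (y * t) Q);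
    apply Hscale, (Rmult_le_reg_l x); nra.
Qed.

Lemma eventually_quadratic_dominates (a b d : R) : 0 < a -> 0 <= b -> 0 < d ->
  exists p0, forall P, p0 <= P -> 1 <= a * P ^ 2 /\
    forall r, 0 < r -> a * P ^ 2 <= r ^ 2 -> b * P + r < d * r ^ 2.
Proof.
  intros Ha Hb Hd.
  assert (Hpos : forall u, 0 < u -> 0 < / u) by (intros; apply Rinv_0_lt_compat; lra).
  assert (Hinv1 : 0 < / a) by auto.
  assert (Hinv2 : 0 <= b * / (a * d))
    by (apply Rmult_le_pos; [lra|left; apply Hpos; nra]).
  assert (Hd2 : 0 < a * d ^ 2) by (apply Rmult_lt_0_compat; [lra|apply pow_lt; lra]).
  assert (Hinv3 : 0 < / (a * d ^ 2)) by auto.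
  exists (1 + / a + 2 * (b * / (a * d)) + 4 * / (a * d ^ 2)); intros P HP.
  assert (HaP : 1 <= a * P).
  { replace 1 with (a * / a) by (field; lra); apply Rmult_le_compat_l; lra. }
  assert (HbP : 2 * b <= a * d * P).
  { replace (2 * b) with (a * d * (2 * (b * / (a * d)))) by (field; lra).
    apply Rmult_le_compat_l; nra. }
  assert (HdP : 4 < a * d ^ 2 * P).
  { replace 4 with (a * d ^ 2 * (4 * / (a * d ^ 2))) by (field; lra).
    apply Rmult_lt_compat_l; nra. }
  split; [nra|].
  intros r Hr Hr2.
  assert (Hdr : 2 < d * r) by nra.
  nra.
Qed.

Lemma ratio_between (x y a b : R) : 0 < b -> x * b < a < y * b -> x < a / b < y.
Proof.
  intros Hb [Hxa Hay].
  split; apply (Rmult_lt_reg_r b); unfold Rdiv;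
    rewrite ?Rmult_assoc, ?Rinv_l, ?Rmult_1_r by lra; lra.
Qed.

Lemma antipalindromic_ratio_in_interval (x y t P : R) (k B : nat) :
  0 < x < y -> antipalindromic B -> t - P <= INR B <= t + P ->
  Rmax (x * t) ((2 ^ k) ^ 2 / 2) + 2 * y * P + 2 * 2 ^ k < Rmin (y * t) ((2 ^ k) ^ 2) ->
  exists A, antipalindromic A /\ x < INR A / INR B < y.
Proof.
  intros [Hx Hxy] HB [HB1 HB2] Hroom.
  destruct (antipalindromic_in_window k (Rmax (x * t) ((2 ^ k) ^ 2 / 2) + y * P)
              (Rmin (y * t) ((2 ^ k) ^ 2) - y * P)) as [A [HA HAab]].
  - pose proof (Rmax_r (x * t) ((2 ^ k) ^ 2 / 2)); nra.
  - lra.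
  - pose proof (Rmin_r (y * t) ((2 ^ k) ^ 2)); nra.
  - exists A; split; [exact HA|].
    apply ratio_between; [apply lt_0_INR, HB|].
    pose proof (Rmax_l (x * t) ((2 ^ k) ^ 2 / 2)).
    pose proof (Rmin_l (y * t) ((2 ^ k) ^ 2)).
    split; nra.
Qed.

Theorem theorem12 : forall x y : R, 0 < x -> x < y ->
  exists A B : nat, antipalindromic A /\ antipalindromic B /\
    x < INR A / INR B < y.
Proof.
  intros x y Hx Hxy.
  set (a := x * y / (x + y)).
  set (d := (y - x) / y).
  assert (Ha : 0 < a) by (apply Rdiv_lt_0_compat; nra).
  assert (Hd : 0 < d) by (apply Rdiv_lt_0_compat; lra).
  destruct (eventually_quadratic_dominates (a / 8) y (d / 8)) as [p0 Hp0]; [lra|lra|lra|].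
  destruct (pow2_unbounded p0) as [m Hm].
  set (P := 2 ^ S m).
  destruct (Hp0 P) as [HaP Hdom]; [unfold P; simpl; pose proof (pow_lt 2 m); lra|].
  destruct (scale_into_octave (a * P ^ 2)) as [k [c [Hc Hoct]]]; [lra|].
  destruct (antipalindromic_near_square m c Hc) as [B [HB HBP]].
  assert (Hover : Rmax (x * (c * P ^ 2)) ((2 ^ k) ^ 2 / 2) + d * ((2 ^ k) ^ 2 / 4)
                  <= Rmin (y * (c * P ^ 2)) ((2 ^ k) ^ 2)).
  { apply octave_overlap; [lra|apply pow_lt, pow_lt; lra|].
    replace (x * y * (c * P ^ 2) / (x + y)) with (c * (a * P ^ 2))
      by (unfold a; field; lra).
    exact Hoct. }
  assert (Hmargin : y * P + 2 ^ k < d / 8 * (2 ^ k) ^ 2).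
  { apply Hdom; [apply pow_lt; lra|destruct Hc as [-> | ->]; lra]. }
  destruct (antipalindromic_ratio_in_interval x y (c * P ^ 2) P k B) as [A [HA HAB]];
    [split; lra|exact HB|exact HBP|lra|].
  exists A, B; easy.
Qed.
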